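(* Let $0.5<\bar P\le1$, $\epsilon>0$, $\omega\ge0$, $\gamma_0\ge\gamma\ge0$. Let $\omega(t),\epsilon_x(t),\epsilon_y(t),\delta\gamma_t$ be real-valued functions of time with $|\omega(t)|\le\omega$, $\sqrt{\epsilon_x^2(t)+\epsilon_y^2(t)}\le\epsilon$, $|\delta\gamma_t|\le\gamma$, and set $H(t)=[1+\omega(t)]I_z+\epsilon_x(t)I_x+\epsilon_y(t)I_y$, $\gamma_t=\gamma_0+\delta\gamma_t$. Let the qubit density matrix $\rho_t$ evolve according to $$\dot\rho_t=-i[H(t),\rho_t]+\gamma_t(\sigma_x\rho_t\sigma_x-\rho_t)+\gamma_t(\sigma_y\rho_t\sigma_y-\rho_t)+\gamma_t(\sigma_z\rho_t\sigma_z-\rho_t)$$ from an initial state with $\mathrm{tr}(\rho_0^2)=1$. Let $T_d=-\frac{\ln(2\bar P-1)}{8(\gamma_0+\gamma)}$. Then for every $t\in[0,T_d]$, $\rho_t\in\mathcal{D}_d=\{\rho:\mathrm{tr}(\rho^2)\ge\bar P\}$. Consequently, if projective measurements of $\sigma_z$ are performed periodically with period $T_d$, the state remains in $\mathcal{D}_d$.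
   Context: $\sigma_x,\sigma_y,\sigma_z$ are the Pauli matrices $\begin{pmatrix}0&1\\1&0\end{pmatrix},\begin{pmatrix}0&-i\\i&0\end{pmatrix},\begin{pmatrix}1&0\\0&-1\end{pmatrix}$, $I_j=\frac12\sigma_j$, $[A,B]=AB-BA$, units with $\hbar=1$. The purity of $\rho$ is $\mathrm{tr}(\rho^2)$. *)

From HB Require Import structures.
From mathcomp Require Import all_boot all_order all_algebra.
From mathcomp Require Import complex.
From mathcomp Require Import all_classical all_reals all_analysis.
Set Implicit Arguments. Unset Strict Implicit. Unset Printing Implicit Defensive.
Import Order.TTheory GRing.Theory Num.Theory.
Import numFieldNormedType.Exports.
Local Open Scope ring_scope.
Local Open Scope classical_set_scope.

Section Qubit.
Variable R : realType.
Local Notation C := R[i].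

(* Pauli matrices, basis order (|0>,|1>) = (ord0, ord_max) *)
Definition sigma_x : 'M[C]_2 :=
  \matrix_(i < 2, j < 2) (if i == j then 0 else 1).
Definition sigma_y : 'M[C]_2 :=
  \matrix_(i < 2, j < 2)
    (if i == j then 0 else if (i : nat) == 0%N then - 'i%C else 'i%C).
Definition sigma_z : 'M[C]_2 :=
  \matrix_(i < 2, j < 2)
    (if i == j then (if (i : nat) == 0%N then 1 else -1) else 0).

Definition I_x : 'M[C]_2 := (2 : C)^-1 *: sigma_x.
Definition I_y : 'M[C]_2 := (2 : C)^-1 *: sigma_y.
Definition I_z : 'M[C]_2 := (2 : C)^-1 *: sigma_z.

Definition commutator (A B : 'M[C]_2) : 'M[C]_2 := A *m B - B *m A.

Definition adjoint (A : 'M[C]_2) : 'M[C]_2 := \matrix_(i, j) ((A j i)^*)%C.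

Definition density_matrix (rho : 'M[C]_2) : Prop :=
  [/\ adjoint rho = rho,
      (forall v : 'cV[C]_2, 0 <= ((\matrix_(i, j) ((v j i)^*)%C) *m rho *m v) 0 0)
    & \tr rho = 1].

Definition purity (rho : 'M[C]_2) : C := \tr (rho *m rho).

Definition hamiltonian (w ex ey : R) : 'M[C]_2 :=
  ((1 + w)%:C)%C *: I_z + (ex%:C)%C *: I_x + (ey%:C)%C *: I_y.

Definition lindblad_rhs (w ex ey g : R) (rho : 'M[C]_2) : 'M[C]_2 :=
  - ('i%C) *: commutator (hamiltonian w ex ey) rho
  + (g%:C)%C *: (sigma_x *m rho *m sigma_x - rho)
  + (g%:C)%C *: (sigma_y *m rho *m sigma_y - rho)
  + (g%:C)%C *: (sigma_z *m rho *m sigma_z - rho).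

Definition solves_master (w ex ey g : R -> R) (rho : R -> 'M[C]_2) : Prop :=
  (forall i j : 'I_2,
     {within [set x : R | 0 <= x], continuous (fun s => complex.Re (rho s i j))} /\
     {within [set x : R | 0 <= x], continuous (fun s => complex.Im (rho s i j))}) /\
  (forall t : R, 0 < t -> forall i j : 'I_2,
     is_derive t 1 (fun s => complex.Re (rho s i j))
       (complex.Re (lindblad_rhs (w t) (ex t) (ey t) (g t) (rho t) i j)) /\
     is_derive t 1 (fun s => complex.Im (rho s i j))
       (complex.Im (lindblad_rhs (w t) (ex t) (ey t) (g t) (rho t) i j))).

End Qubit.

(** The three dissipators form a depolarizing channel:
    [sum_k sigma_k rho sigma_k = 2 (tr rho) 1 - rho].  Let
    [Q = 2 tr(rho^2) - (tr rho)^2], the squared length of the Bloch vector.  Along the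
    flow the trace is conserved, the Hamiltonian drops out of [dQ/dt] because
    [tr (rho [H, rho]) = 0], and the dissipators give [dQ/dt = -8 gamma_t Q].  From a pure
    state [Q(0) = 1], so [gamma_t <= gamma0 + gamma] yields
    [Q(t) >= exp (-8 (gamma0 + gamma) t) >= 2 Pbar - 1] for [t <= T_d], that is
    [tr(rho_t^2) = (1 + Q(t)) / 2 >= Pbar]. *)
From HB Require Import structures.
From mathcomp Require Import all_boot all_order all_algebra.
From mathcomp Require Import complex.
From mathcomp Require Import all_classical all_reals all_analysis.
From mathcomp Require Import ring lra.
Import Order.TTheory GRing.Theory Num.Theory.
Import numFieldNormedType.Exports.
Local Open Scope ring_scope.
Local Open Scope classical_set_scope.

Section LinearODE.
Context {R : realType}.
Implicit Types (f a df : R -> R) (c s t : R).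

Lemma init_le_of_derive_ge0 f df t : 0 <= t ->
  {within [set x | 0 <= x], continuous f} ->
  (forall s, 0 < s -> is_derive s 1 f (df s)) ->
  (forall s, 0 < s -> 0 <= df s) -> f 0 <= f t.
Proof.
move=> t0 cf df_f df_ge0.
apply: (@ger0_derive1_ndecr R f 0 t) => //.
- move=> x; rewrite in_itv /= => /andP[x0 _].
  exact: (@ex_derive _ _ _ _ _ _ _ (df_f x x0)).
- move=> x; rewrite in_itv /= => /andP[x0 _].
  by have hx := df_f x x0; rewrite derive1E derive_val; exact: df_ge0.
- by apply: continuous_subspaceW cf => x /=; rewrite in_itv /= => /andP[].
Qed.

Lemma eq_init_of_derive0 f t : 0 <= t ->
  {within [set x | 0 <= x], continuous f} ->
  (forall s, 0 < s -> is_derive s 1 f 0) -> f t = f 0.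
Proof.
move=> t0 cf df0; apply/eqP; rewrite eq_le; apply/andP; split; last first.
  exact: (@init_le_of_derive_ge0 f (fun=> 0)).
rewrite -lerN2; apply: (@init_le_of_derive_ge0 (fun s => - f s) (fun=> 0)) => //.
- by move=> x; exact: continuousN (cf x).
- by move=> s s0; apply: is_derive_eq (is_deriveN (df0 s s0)) _; rewrite oppr0.
Qed.

Lemma linear_ode_eq0 f a t : 0 <= t ->
  {within [set x | 0 <= x], continuous f} ->
  (forall s, 0 < s -> is_derive s 1 f (a s * f s)) ->
  (forall s, 0 < s -> a s <= 0) -> f 0 = 0 -> f t = 0.
Proof.
move=> t0 cf df a_le0 f0.
have : 0 <= - (f t * f t).
  have := @init_le_of_derive_ge0 (fun s => - (f s * f s))
    (fun s => 2 * - a s * (f s * f s)) t t0; rewrite f0 mulr0 oppr0; apply.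
  - by move=> x; exact: continuousN (continuousM (cf x) (cf x)).
  - move=> s s0; apply: is_derive_eq (is_deriveN (is_deriveM (df s s0) (df s s0))) _.
    by rewrite /GRing.scale /=; ring.
  - move=> s s0; apply: mulr_ge0; last exact: sqr_ge0.
    by rewrite mulr_ge0 // oppr_ge0 a_le0.
rewrite oppr_ge0 => ff_le0.
by apply/eqP; rewrite -sqrf_eq0 eq_le ff_le0 sqr_ge0.
Qed.

Lemma continuous_gt0 f t : 0 <= t ->
  {within [set x | 0 <= x], continuous f} ->
  0 < f 0 -> (forall s, 0 <= s -> f s != 0) -> 0 < f t.
Proof.
move=> t0 cf f0_gt0 f_neq0; rewrite ltNge; apply/negP => ft_le0.
have cf0t : {within `[0, t], continuous f}.
  by apply: continuous_subspaceW cf => x /=; rewrite in_itv /= => /andP[].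
have [|s] := @IVT R f 0 t 0 t0 cf0t.
  by rewrite ge_min ft_le0 orbT le_max ltW.
by rewrite in_itv /= => /andP[s0 _] /eqP; apply/negP/f_neq0.
Qed.

(* [f^2 exp (2 c s)] is nondecreasing, so [f] never vanishes and [f^2 >= exp (-2 c s)]. *)
Lemma expR_le_linear_ode f a c t : 0 <= t ->
  {within [set x | 0 <= x], continuous f} ->
  (forall s, 0 < s -> is_derive s 1 f (a s * f s)) ->
  (forall s, 0 < s -> - c <= a s) -> f 0 = 1 -> expR (- c * t) <= f t.
Proof.
move=> t0 cf df a_ge f0.
pose E s := expR (2 * c * s).
have dE s : is_derive s 1 E (2 * c * E s).
  have dlin : is_derive s 1 (fun s => 2 * c * s) (2 * c).
    apply: is_derive_eq (is_deriveZ (2 * c) (is_derive_id s 1)) _.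
    by rewrite /GRing.scale /= mulr1.
  by apply: is_derive_eq (is_derive1_comp (is_derive_expR _) dlin) _; rewrite mulrC.
have cE : {within [set x | 0 <= x], continuous E}.
  apply: continuous_subspaceT => x; apply: differentiable_continuous.
  by apply/derivable1_diffP; exact: (@ex_derive _ _ _ _ _ _ _ (dE x)).
have one_le s : 0 <= s -> 1 <= f s * f s * E s.
  move=> s0; have := @init_le_of_derive_ge0 (fun s => f s * f s * E s)
    (fun s => 2 * (f s * f s) * E s * (a s + c)) s s0.
  rewrite f0 /E mulr0 expR0 !mulr1; apply.
  - by move=> x; exact: continuousM (continuousM (cf x) (cf x)) (cE x).
  - move=> u u0; apply: is_derive_eq (is_deriveM (is_deriveM (df u u0) (df u u0)) (dE u)) _.
    by rewrite /GRing.scale /= /E (_ : (f * f) u = f u * f u) //; ring.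
  - move=> u u0; apply: mulr_ge0; last by rewrite -lerBlDr sub0r a_ge.
    apply: mulr_ge0; last exact: expR_ge0.
    by apply: mulr_ge0 => //; exact: sqr_ge0.
have ft_gt0 : 0 < f t.
  apply: continuous_gt0 => // [|s s0]; first by rewrite f0.
  by apply/eqP => fs0; have := one_le s s0; rewrite fs0 !mul0r ler10.
rewrite -(ler_sqr (ltW (expR_gt0 _)) (ltW ft_gt0)) !expr2.
rewrite -(ler_pM2r (expR_gt0 (2 * c * t))) -!expRD.
by rewrite (_ : _ + _ = 0) ?expR0 ?one_le //; ring.
Qed.

End LinearODE.

Section ComplexCalculus.
Context {R : realType}.
Local Notation C := R[i].
Implicit Types (f g : R -> C) (t k : R) (z : C).

Definition is_cderive f t z :=
  is_derive t 1 (fun s => complex.Re (f s)) (complex.Re z) /\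
  is_derive t 1 (fun s => complex.Im (f s)) (complex.Im z).

Definition ccontinuous f :=
  {within [set x | 0 <= x], continuous (fun s => complex.Re (f s))} /\
  {within [set x | 0 <= x], continuous (fun s => complex.Im (f s))}.

Lemma Re_funD f g :
  (fun s => complex.Re (f s + g s)) = (fun s => complex.Re (f s) + complex.Re (g s)).
Proof. by apply/funext => s; case: (f s) (g s) => ? ? []. Qed.

Lemma Im_funD f g :
  (fun s => complex.Im (f s + g s)) = (fun s => complex.Im (f s) + complex.Im (g s)).
Proof. by apply/funext => s; case: (f s) (g s) => ? ? []. Qed.

Lemma Re_funN f : (fun s => complex.Re (- f s)) = (fun s => - complex.Re (f s)).
Proof. by apply/funext => s; case: (f s). Qed.

Lemma Im_funN f : (fun s => complex.Im (- f s)) = (fun s => - complex.Im (f s)).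
Proof. by apply/funext => s; case: (f s). Qed.

Lemma Re_funM f g : (fun s => complex.Re (f s * g s)) =
  (fun s => complex.Re (f s) * complex.Re (g s) - complex.Im (f s) * complex.Im (g s)).
Proof. by apply/funext => s; case: (f s) (g s) => ? ? []. Qed.

Lemma Im_funM f g : (fun s => complex.Im (f s * g s)) =
  (fun s => complex.Re (f s) * complex.Im (g s) + complex.Im (f s) * complex.Re (g s)).
Proof. by apply/funext => s; case: (f s) (g s) => ? ? []. Qed.

Lemma is_cderive_eq {f t z1} z2 : is_cderive f t z1 -> z1 = z2 -> is_cderive f t z2.
Proof. by move=> ? <-. Qed.

Lemma is_cderive_cst (w : C) t : is_cderive (fun=> w) t 0.
Proof. by split; exact: is_derive_cst. Qed.

Lemma is_cderiveD {f g t z1 z2} : is_cderive f t z1 -> is_cderive g t z2 ->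
  is_cderive (fun s => f s + g s) t (z1 + z2).
Proof.
move: z1 z2 => [? ?] [? ?] [f1 f2] [g1 g2].
by split; rewrite ?Re_funD ?Im_funD; exact: is_deriveD.
Qed.

Lemma is_cderiveN {f t z} : is_cderive f t z -> is_cderive (fun s => - f s) t (- z).
Proof. by move: z => [? ?] [f1 f2]; split; rewrite ?Re_funN ?Im_funN; exact: is_deriveN. Qed.

Lemma is_cderiveM {f g t z1 z2} : is_cderive f t z1 -> is_cderive g t z2 ->
  is_cderive (fun s => f s * g s) t (f t * z2 + z1 * g t).
Proof.
move=> [f1 f2] [g1 g2]; split; rewrite ?Re_funM ?Im_funM.
- apply: is_derive_eq (is_deriveB (is_deriveM f1 g1) (is_deriveM f2 g2)) _.
  rewrite /GRing.scale /=.
  by case: (f t) (g t) z1 z2 {f1 f2 g1 g2} => ? ? [? ?] [? ?] [? ?] /=; ring.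
- apply: is_derive_eq (is_deriveD (is_deriveM f1 g2) (is_deriveM f2 g1)) _.
  rewrite /GRing.scale /=.
  by case: (f t) (g t) z1 z2 {f1 f2 g1 g2} => ? ? [? ?] [? ?] [? ?] /=; ring.
Qed.

Lemma is_cderive_realM {f t k} : is_cderive f t ((k%:C)%C * f t) ->
  is_derive t 1 (fun s => complex.Re (f s)) (k * complex.Re (f t)) /\
  is_derive t 1 (fun s => complex.Im (f s)) (k * complex.Im (f t)).
Proof. by case: (f t) => x y [df1 df2]; split; rewrite /= ?mul0r ?subr0 ?addr0 in df1 df2. Qed.

Lemma ccontinuous_cst (w : C) : ccontinuous (fun=> w).
Proof. by split => x; exact: cst_continuous. Qed.

Lemma ccontinuousD {f g} : ccontinuous f -> ccontinuous g -> ccontinuous (fun s => f s + g s).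
Proof.
move=> [f1 f2] [g1 g2]; split; rewrite ?Re_funD ?Im_funD => x.
- exact: continuousD (f1 x) (g1 x).
- exact: continuousD (f2 x) (g2 x).
Qed.

Lemma ccontinuousN {f} : ccontinuous f -> ccontinuous (fun s => - f s).
Proof.
move=> [f1 f2]; split; rewrite ?Re_funN ?Im_funN => x.
- exact: continuousN (f1 x).
- exact: continuousN (f2 x).
Qed.

Lemma ccontinuousM {f g} : ccontinuous f -> ccontinuous g -> ccontinuous (fun s => f s * g s).
Proof.
move=> [f1 f2] [g1 g2]; split; rewrite ?Re_funM ?Im_funM => x.
- exact: continuousB (continuousM (f1 x) (g1 x)) (continuousM (f2 x) (g2 x)).
- exact: continuousD (continuousM (f1 x) (g2 x)) (continuousM (f2 x) (g1 x)).
Qed.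

Lemma eq_init_of_cderive0 {f t} : 0 <= t -> ccontinuous f ->
  (forall s, 0 < s -> is_cderive f s 0) -> f t = f 0.
Proof.
move=> t0 [cf1 cf2] df; apply/eqP; rewrite eq_complex.
rewrite (eq_init_of_derive0 _ _ t0 cf1 (fun s s0 => (df s s0).1)).
by rewrite (eq_init_of_derive0 _ _ t0 cf2 (fun s s0 => (df s s0).2)) !eqxx.
Qed.

End ComplexCalculus.

Lemma sum_ord2 (V : nmodType) (F : 'I_2 -> V) : \sum_(i < 2) F i = F ord0 + F ord_max.
Proof. by rewrite big_ord_recl big_ord1; congr (_ + F _); apply: val_inj. Qed.

Lemma mxtrace_conj_invol {T : comNzRingType} {n} {S : 'M[T]_n} (A : 'M[T]_n) :
  S *m S = 1%:M -> \tr (S *m A *m S) = \tr A.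
Proof. by move=> SS; rewrite mxtrace_mulC mulmxA SS mul1mx. Qed.

Section Qubit.
Context {R : realType}.
Local Notation C := R[i].
Implicit Types (r : 'M[C]_2) (w ex ey g : R).

Lemma mulmx2E (A B : 'M[C]_2) i j :
  (A *m B) i j = A i ord0 * B ord0 j + A i ord_max * B ord_max j.
Proof. by rewrite mxE sum_ord2. Qed.

Lemma mxtrace2E r : \tr r = r ord0 ord0 + r ord_max ord_max.
Proof. exact: sum_ord2. Qed.

Lemma sigma_x_sqr : sigma_x R *m sigma_x R = 1%:M.
Proof. by apply/matrixP => -[[|[|//]] ?] [[|[|//]] ?]; rewrite mulmx2E !mxE /=; simpc. Qed.

Lemma sigma_y_sqr : sigma_y R *m sigma_y R = 1%:M.
Proof. by apply/matrixP => -[[|[|//]] ?] [[|[|//]] ?]; rewrite mulmx2E !mxE /=; simpc. Qed.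

Lemma sigma_z_sqr : sigma_z R *m sigma_z R = 1%:M.
Proof. by apply/matrixP => -[[|[|//]] ?] [[|[|//]] ?]; rewrite mulmx2E !mxE /=; simpc. Qed.

(* For a density matrix [r = (1 + x sigma_x + y sigma_y + z sigma_z) / 2] this is
   [x^2 + y^2 + z^2]. *)
Definition bloch_sqnorm r : C :=
  (r ord0 ord0 - r ord_max ord_max) ^+ 2 + 4 * (r ord0 ord_max * r ord_max ord0).

Lemma bloch_sqnormE r : bloch_sqnorm r = 2 * purity r - \tr r ^+ 2.
Proof. by rewrite /bloch_sqnorm /purity !mxtrace2E !mulmx2E; ring. Qed.

Lemma mxtrace_commutator (A B : 'M[C]_2) : \tr (commutator A B) = 0.
Proof. by rewrite /commutator raddfB /= mxtrace_mulC subrr. Qed.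

Lemma mxtrace_mul_commutator (A B : 'M[C]_2) : \tr (B *m commutator A B) = 0.
Proof. by rewrite /commutator mulmxBr raddfB /= mulmxA mxtrace_mulC mulmxA subrr. Qed.

(* The Pauli twirl [sum_k sigma_k r sigma_k = 2 (tr r) 1 - r], paired with [r]. *)
Lemma mxtrace_mul_pauli_twirl r :
  \tr (r *m (sigma_x R *m r *m sigma_x R)) + \tr (r *m (sigma_y R *m r *m sigma_y R))
  + \tr (r *m (sigma_z R *m r *m sigma_z R)) = 2 * \tr r ^+ 2 - \tr (r *m r).
Proof.
rewrite !mxtrace2E !mulmx2E !mxE /=.
have i2 := sqr_i R; ring: i2.
Qed.

Lemma mxtrace_lindblad_rhs w ex ey g r : \tr (lindblad_rhs w ex ey g r) = 0.
Proof.
have := mxtrace_commutator (hamiltonian w ex ey) r.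
have := mxtrace_conj_invol r sigma_x_sqr.
have := mxtrace_conj_invol r sigma_y_sqr.
have := mxtrace_conj_invol r sigma_z_sqr.
rewrite /lindblad_rhs; move: (commutator _ r) (sigma_x R *m r *m sigma_x R)
  (sigma_y R *m r *m sigma_y R) (sigma_z R *m r *m sigma_z R) (g%:C)%C
  => K X Y Z G trZ trY trX trK.
by rewrite !mxtraceD !mxtraceZ !raddfB /= trK trX trY trZ subrr !mulr0 !addr0.
Qed.

Lemma mxtrace_mul_lindblad_rhs w ex ey g r :
  \tr (r *m lindblad_rhs w ex ey g r) = 2 * (g%:C)%C * (\tr r ^+ 2 - 2 * \tr (r *m r)).
Proof.
have := mxtrace_mul_commutator (hamiltonian w ex ey) r.
have := mxtrace_mul_pauli_twirl r.
rewrite /lindblad_rhs; move: (commutator _ r) (sigma_x R *m r *m sigma_x R)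
  (sigma_y R *m r *m sigma_y R) (sigma_z R *m r *m sigma_z R) (g%:C)%C
  => K X Y Z G twirl trK.
rewrite !mulmxDr !mxtraceD -!scalemxAr !mxtraceZ !mulmxBr !raddfB /= trK.
have -> : \tr (r *m Z) = 2 * \tr r ^+ 2 - \tr (r *m r) - \tr (r *m X) - \tr (r *m Y).
  by rewrite -twirl; ring.
ring.
Qed.

Lemma bloch_sqnorm_lindblad w ex ey g r :
  4 * \tr (r *m lindblad_rhs w ex ey g r) - 2 * \tr r * \tr (lindblad_rhs w ex ey g r)
  = ((-8 * g)%:C)%C * bloch_sqnorm r.
Proof.
rewrite mxtrace_lindblad_rhs mxtrace_mul_lindblad_rhs bloch_sqnormE /purity.
by rewrite rmorphM rmorphN /= rmorph_nat; ring.
Qed.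

Lemma purity_ge_of_bloch_sqnorm r (P : R) : \tr r = 1 ->
  complex.Im (bloch_sqnorm r) = 0 -> 2 * P - 1 <= complex.Re (bloch_sqnorm r) ->
  (P%:C)%C <= purity r.
Proof.
move=> tr1; rewrite bloch_sqnormE tr1 expr1n.
case: (purity r) => p1 p2 /= Im0 Re_ge; rewrite lecE /=.
by apply/andP; split; [apply/eqP|]; lra.
Qed.

End Qubit.

Section MasterEquation.
Context {R : realType}.
Local Notation C := R[i].
Implicit Types (D : 'M[C]_2) (rho : R -> 'M[C]_2) (c t : R).

Definition mx_cderive (rho : R -> 'M[C]_2) t (D : 'M[C]_2) :=
  forall i j, is_cderive (fun s => rho s i j) t (D i j).

Definition mx_ccontinuous (rho : R -> 'M[C]_2) :=
  forall i j, ccontinuous (fun s => rho s i j).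

Lemma mxtrace_funE rho :
  (fun s => \tr (rho s)) = (fun s => rho s ord0 ord0 + rho s ord_max ord_max).
Proof. by apply/funext => s; exact: mxtrace2E. Qed.

Lemma bloch_sqnorm_funE rho : (fun s => bloch_sqnorm (rho s)) = (fun s =>
  (rho s ord0 ord0 - rho s ord_max ord_max) * (rho s ord0 ord0 - rho s ord_max ord_max)
  + 4 * (rho s ord0 ord_max * rho s ord_max ord0)).
Proof. by apply/funext => s; rewrite /bloch_sqnorm expr2. Qed.

Lemma is_cderive_mxtrace {rho t D} : mx_cderive rho t D ->
  is_cderive (fun s => \tr (rho s)) t (\tr D).
Proof.
by move=> drho; rewrite mxtrace_funE mxtrace2E; exact: is_cderiveD.
Qed.

Lemma ccontinuous_mxtrace {rho} : mx_ccontinuous rho -> ccontinuous (fun s => \tr (rho s)).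
Proof.
by move=> crho; rewrite mxtrace_funE; exact: ccontinuousD.
Qed.

Lemma is_cderive_bloch_sqnorm {rho t D} : mx_cderive rho t D ->
  is_cderive (fun s => bloch_sqnorm (rho s)) t
    (4 * \tr (rho t *m D) - 2 * \tr (rho t) * \tr D).
Proof.
move=> drho; rewrite bloch_sqnorm_funE.
have ddiag := is_cderiveD (drho ord0 ord0) (is_cderiveN (drho ord_max ord_max)).
apply: is_cderive_eq (is_cderiveD (is_cderiveM ddiag ddiag) (is_cderiveM
  (is_cderive_cst 4 t) (is_cderiveM (drho ord0 ord_max) (drho ord_max ord0)))) _.
by rewrite !mxtrace2E !mulmx2E; ring.
Qed.

Lemma ccontinuous_bloch_sqnorm {rho} : mx_ccontinuous rho ->
  ccontinuous (fun s => bloch_sqnorm (rho s)).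
Proof.
move=> crho; rewrite bloch_sqnorm_funE.
have cdiag := ccontinuousD (crho ord0 ord0) (ccontinuousN (crho ord_max ord_max)).
exact: ccontinuousD (ccontinuousM cdiag cdiag)
  (ccontinuousM (ccontinuous_cst 4) (ccontinuousM (crho ord0 ord_max) (crho ord_max ord0))).
Qed.

Lemma master_mxtrace {w ex ey g : R -> R} {rho t} : solves_master w ex ey g rho -> 0 <= t ->
  \tr (rho t) = \tr (rho 0).
Proof.
move=> [crho drho] t0; apply: eq_init_of_cderive0 t0 (ccontinuous_mxtrace crho) _.
move=> s s0; apply: is_cderive_eq (is_cderive_mxtrace (drho s s0)) _.
exact: mxtrace_lindblad_rhs.
Qed.

Lemma master_bloch_sqnorm {w ex ey g : R -> R} {rho c t} : solves_master w ex ey g rho ->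
  (forall s, 0 < s -> 0 <= g s <= c) -> bloch_sqnorm (rho 0) = 1 -> 0 <= t ->
  complex.Im (bloch_sqnorm (rho t)) = 0 /\
  expR (- (8 * c) * t) <= complex.Re (bloch_sqnorm (rho t)).
Proof.
move=> [crho drho] g_bd Q0 t0.
have [cRe cIm] := ccontinuous_bloch_sqnorm crho.
have dQ s : 0 < s -> is_cderive (fun u => bloch_sqnorm (rho u)) s
    (((-8 * g s)%:C)%C * bloch_sqnorm (rho s)).
  move=> s0; apply: is_cderive_eq (is_cderive_bloch_sqnorm (drho s s0)) _.
  exact: bloch_sqnorm_lindblad.
split.
- apply: (linear_ode_eq0 _ (fun s => -8 * g s) _ t0 cIm).
  + by move=> s s0; exact: (is_cderive_realM (dQ s s0)).2.
  + by move=> s /g_bd/andP[g0 _]; lra.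
  + by rewrite Q0.
- apply: (expR_le_linear_ode _ (fun s => -8 * g s) _ _ t0 cRe).
  + by move=> s s0; exact: (is_cderive_realM (dQ s s0)).1.
  + by move=> s /g_bd/andP[_ gc]; lra.
  + by rewrite Q0.
Qed.

End MasterEquation.

Theorem theorem5 (R : realType) (Pbar eps omega gamma0 gamma : R)
  (w ex ey dg : R -> R) (rho : R -> 'M[R[i]]_2) :
  1 / 2 < Pbar -> Pbar <= 1 -> 0 < eps -> 0 <= omega ->
  0 <= gamma -> gamma <= gamma0 ->
  (forall t, 0 <= t -> `|w t| <= omega) ->
  (forall t, 0 <= t -> Num.sqrt (ex t ^+ 2 + ey t ^+ 2) <= eps) ->
  (forall t, 0 <= t -> `|dg t| <= gamma) ->
  solves_master w ex ey (fun t => gamma0 + dg t) rho ->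
  density_matrix (rho 0) ->
  purity (rho 0) = 1 ->
  forall t : R, 0 <= t ->
    (* t <= T_d, with T_d = - ln(2 Pbar - 1) / (8 (gamma0 + gamma)) *)
    8 * (gamma0 + gamma) * t <= - ln (2 * Pbar - 1) ->
    ((Pbar%:C)%C <= purity (rho t)).
Proof.
move=> Pbar_gt _ _ _ gamma_ge0 gamma_le _ _ dg_le sol [_ _ tr0] pur0 t t0 t_le.
have rate_bd s : 0 < s -> 0 <= gamma0 + dg s <= gamma0 + gamma.
  move=> s0; have := dg_le s (ltW s0); rewrite ler_norml => /andP[? ?].
  by apply/andP; split; lra.
have Q0 : bloch_sqnorm (rho 0) = 1 by rewrite bloch_sqnormE pur0 tr0; ring.
have [ImQ ReQ] := master_bloch_sqnorm sol rate_bd Q0 t0.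
apply: purity_ge_of_bloch_sqnorm => //; first by rewrite (master_mxtrace sol t0).
apply: le_trans ReQ; rewrite -[X in X <= _]lnK ?ler_expR; first lra.
by rewrite posrE; lra.
Qed.
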